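(* There is an absolute constant $c>0$ such that the following holds. Let $H=(V,E)$ be a hypergraph of rank at most $r$ and maximum degree at most $\Delta$, given with a good coloring and an edge-weighting $a$. Then there is a deterministic $O(r\Delta)$-round LOCAL algorithm that computes a matching $M$ with $$a(M)\ge c\,\frac{a(E)}{r\Delta}.$$
   Context: **Hypergraph notation.** - A matching is a set of pairwise disjoint edges. - An edge-weighting is $a:E\to[0,\infty)$, with $a(L)=\sum_{e\in L}a(e)$. **LOCAL model.** The model is run on the incidence graph $\mathrm{Inc}(H)$ (bipartite, one node per vertex and per edge, where $v$ and $e$ are adjacent iff $v\in e$). In synchronous rounds, nodes do unbounded computation and exchange unbounded messages with neighbours. Nodes have unique IDs, and upper bounds $n,\Delta,r\ (r\ge2)$ are globally known. **Good coloring.** A good coloring of $H$ is a proper vertex coloring of $\mathrm{Inc}(H)^2$ (nodes adjacent iff at distance $\le2$ in $\mathrm{Inc}(H)$) using $\mathrm{poly}(r,\Delta)$ colors. *)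

From HB Require Import structures.
From mathcomp Require Import all_boot all_order all_algebra.
Set Implicit Arguments. Unset Strict Implicit. Unset Printing Implicit Defensive.
Import Order.TTheory GRing.Theory Num.Theory.

(* A hypergraph: vertex type V, edge type E, each edge e is the vertex set [ev e]
   (ev injective: no repeated edges).  Incidence graph Inc(H) has node type V + E. *)

Definition inc_adj (V E : finType) (ev : E -> {set V}) (x y : V + E) : bool :=
  match x, y with
  | inl v, inr e => v \in ev e
  | inr e, inl v => v \in ev e
  | _, _ => false
  end.

(* proper vertex coloring of Inc(H)^2: distinct nodes at distance 1 or 2 get distinct colors *)
Definition dist2_proper (V E : finType) (ev : E -> {set V}) (col : V + E -> nat) : Prop :=
  forall x y : V + E, x != y ->
    (inc_adj ev x y || [exists z, inc_adj ev x z && inc_adj ev z y]) -> col x != col y.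

Definition rank_le (V E : finType) (ev : E -> {set V}) (r : nat) : Prop :=
  forall e : E, #|ev e| <= r.

Definition maxdeg_le (V E : finType) (ev : E -> {set V}) (D : nat) : Prop :=
  forall v : V, #|[set e : E | v \in ev e]| <= D.

Definition is_matching (V E : finType) (ev : E -> {set V}) (M : {set E}) : Prop :=
  forall e1 e2, e1 \in M -> e2 \in M -> e1 != e2 -> [disjoint ev e1 & ev e2].

Definition weight (R : realFieldType) (E : finType) (a : E -> R) (L : {set E}) : R :=
  (\sum_(e in L) a e)%R.

(* ---- LOCAL model, full-information form ----
   The local input of a node: (is_edge, ID, color, weight) (weight 0 for vertices).
   The knowledge of a node after t synchronous rounds with unbounded messages:
   after 0 rounds, its own input; after t+1 rounds, its own input together with the
   round-t knowledge of all its Inc(H)-neighbours (listed by increasing ID, which is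
   information the node has anyway).  A deterministic t-round LOCAL algorithm is
   exactly a map from round-t knowledge to outputs. *)

Inductive view (R : Type) : Type :=
  | VNode : bool * nat * nat * R -> seq (view R) -> view R.

Section Local.
Variables (R : realFieldType) (V E : finType) (ev : E -> {set V})
          (id : V + E -> nat) (col : V + E -> nat) (a : E -> R).

Definition local_input (x : V + E) : bool * nat * nat * R :=
  match x with
  | inl v => (false, id x, col x, 0%R)
  | inr e => (true, id x, col x, a e)
  end.

Definition nbrs (x : V + E) : seq (V + E) :=
  sort (fun y z => id y <= id z) (enum (inc_adj ev x)).

Fixpoint knowledge (t : nat) (x : V + E) : view R :=
  match t with
  | 0 => VNode (local_input x) [::]
  | t'.+1 => VNode (local_input x) [seq knowledge t' y | y <- nbrs x]
  end.

Definition run_local (t : nat) (A : view R -> bool) : {set E} :=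
  [set e : E | A (knowledge t (inr e))].
End Local.

From HB Require Import structures.
From mathcomp Require Import all_boot all_order all_algebra finfield.
From mathcomp Require Import zify lra.
Set Implicit Arguments. Unset Strict Implicit. Unset Printing Implicit Defensive.
Import Order.TTheory GRing.Theory Num.Theory.

(* Every edge of [H] runs a three-phase protocol; one protocol step costs two rounds
   (edge -> vertex -> edge).  First a Linial-type colour reduction: over a field [F]
   with [|F| = Q = O(k r Delta)], the input colour [c < (r + Delta)^k] is read as a
   monic polynomial [P_c] of degree [k + 1] whose low coefficients are the base-[Q]
   digits of [c]; at step [j] an uncoloured edge proposes [P_c(x_j)] and keeps it
   unless an adjacent edge holds or proposes the same value.  Distinct [P_c] agree in
   at most [k] points and [P_c] takes a given value at most [k + 1] times, so after
   [N > 2 (k + 1) r Delta] steps the edges are properly coloured with [Q] colours.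
   Second, in increasing colour order, every edge takes
   [delta e = max 0 (a e - sum of delta f)] over lower-coloured edges [f] meeting it.
   Third, in decreasing colour order, an edge joins [M] if [delta e > 0] and no
   adjacent higher-coloured edge has joined.  Then [M] is a matching,
   [sum delta <= a(M)] by charging, and [a(E) <= (1 + r Delta) sum delta]. *)

Section ViewSimulation.
Variables (R : realFieldType) (S : Type).
Variable init : bool * nat * nat * R -> S.
Variable step : nat -> bool * nat * nat * R -> S -> seq S -> S.

Definition view_input (w : view R) : bool * nat * nat * R := let: VNode i _ := w in i.
Definition view_children (w : view R) : seq (view R) := let: VNode _ ws := w in ws.

Fixpoint view_trunc (t : nat) (w : view R) : view R :=
  let: VNode i ws := w in
  if t is t'.+1 then VNode i (map (view_trunc t') ws) else VNode i [::].

Fixpoint run_view (t : nat) (w : view R) : S :=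
  if t is t'.+1 then
    step t' (view_input w) (run_view t' (view_trunc t' w)) (map (run_view t') (view_children w))
  else init (view_input w).

Variables (V E : finType) (ev : E -> {set V}) (id col : V + E -> nat) (a : E -> R).

Fixpoint local_state (t : nat) (x : V + E) : S :=
  if t is t'.+1 then
    step t' (local_input id col a x) (local_state t' x) (map (local_state t') (nbrs ev id x))
  else init (local_input id col a x).

Lemma view_trunc_knowledge t x :
  view_trunc t (knowledge ev id col a t.+1 x) = knowledge ev id col a t x.
Proof.
elim: t x => [|t IHt] x //=; rewrite -map_comp.
by congr VNode; apply: eq_map => y /=; apply: IHt.
Qed.

Lemma run_view_knowledge t x : run_view t (knowledge ev id col a t x) = local_state t x.
Proof.
elim: t x => [|t IHt] x //=; rewrite view_trunc_knowledge IHt -map_comp.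
by congr (step _ _ _ _); apply: eq_map => y; apply: IHt.
Qed.

End ViewSimulation.

Section EdgeAdjacency.
Variables (V E : finType) (ev : E -> {set V}).

Definition edge_adj (e f : E) : bool :=
  (f != e) && [exists v, (v \in ev e) && (v \in ev f)].

Lemma edge_adj_sym e f : edge_adj e f = edge_adj f e.
Proof.
rewrite /edge_adj eq_sym; congr (_ && _).
by apply/existsP/existsP => -[v /andP [h1 h2]]; exists v; rewrite h1 h2.
Qed.

Lemma edge_adjP e f :
  reflect (f != e /\ exists2 v, v \in ev e & v \in ev f) (edge_adj e f).
Proof.
apply: (iffP andP) => -[fe H]; split=> //.
  by case/existsP: H => v /andP []; exists v.
by case: H => v h1 h2; apply/existsP; exists v; rewrite h1 h2.
Qed.

Lemma card_bigcup_leq (I T : finType) (P : pred I) (A : I -> {set T}) :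
  #|\bigcup_(i | P i) A i| <= \sum_(i | P i) #|A i|.
Proof.
elim/big_ind2: _ => [|S1 n1 S2 n2 h1 h2|//]; first by rewrite cards0.
exact: leq_trans (leq_card_setU _ _) (leq_add h1 h2).
Qed.

Lemma card_edge_adj r D e : rank_le ev r -> maxdeg_le ev D ->
  #|[set f | edge_adj e f]| <= r * D.
Proof.
move=> hr hD.
have sub : [set f | edge_adj e f] \subset \bigcup_(v in ev e) [set f | v \in ev f].
  apply/subsetP => f; rewrite inE => /edge_adjP [_ [v ve vf]].
  by apply/bigcupP; exists v; rewrite ?inE.
apply: leq_trans (subset_leq_card sub) (leq_trans (card_bigcup_leq _ _) _).
apply: (@leq_trans (\sum_(v in ev e) D)); first by apply: leq_sum => v _; apply: hD.
by rewrite sum_nat_const leq_mul2r hr orbT.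
Qed.

Lemma edge_adj_col (col : V + E -> nat) e f :
  dist2_proper ev col -> edge_adj e f -> col (inr e) != col (inr f).
Proof.
move=> hcol /edge_adjP [fe [v ve vf]]; apply: hcol.
  by rewrite (inj_eq (@inr_inj _ _)) eq_sym.
by apply/orP; right; apply/existsP; exists (inl v); rewrite /= ve vf.
Qed.

End EdgeAdjacency.

Section EdgeProtocol.
Variables (R : realFieldType) (T : Type) (tag : T -> nat).
Variable init : bool * nat * nat * R -> T.
Variable estep : nat -> T -> seq T -> T.
Hypothesis init_tag : forall i, tag (init i) = i.1.1.2.
Hypothesis estep_tag : forall j s ns, tag (estep j s ns) = tag s.

(* Vertices copy the states of their edges in even rounds, edges update in odd rounds;
   an edge recognises (and drops) its own copies by their tag. *)
Definition proto_init (i : bool * nat * nat * R) : T * seq T := (init i, [::]).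

Definition proto_step t (i : bool * nat * nat * R) (s : T * seq T) (ns : seq (T * seq T)) :=
  if i.1.1.1 then
    if odd t then (estep t./2 s.1 [seq f <- flatten (map snd ns) | tag f != tag s.1], s.2)
    else s
  else if odd t then s else (s.1, map fst ns).

Variables (V E : finType) (ev : E -> {set V}) (id col : V + E -> nat) (a : E -> R).
Hypothesis id_inj : injective id.

Local Notation state t x := (local_state proto_init proto_step ev id col a t x).

Definition edge_state j e : T := (state j.*2 (inr e)).1.

Definition adj_states j e : seq T :=
  [seq f <- flatten [seq (state j.*2.+1 y).2 | y <- nbrs ev id (inr e)] | tag f != id (inr e)].

Lemma tag_state t e : tag (state t (inr e)).1 = id (inr e).
Proof.
elim: t => [|t IHt] /=; first exact: init_tag.
by rewrite /proto_step /=; case: ifP => //= _; rewrite estep_tag.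
Qed.

Lemma edge_state_succ j e : edge_state j.+1 e = estep j (edge_state j e) (adj_states j e).
Proof.
have state_succ t x : state t.+1 x =
    proto_step t (local_input id col a x) (state t x) [seq state t y | y <- nbrs ev id x] by [].
have idle : state j.*2.+1 (inr e) = state j.*2 (inr e).
  by rewrite state_succ /proto_step /= odd_double.
rewrite /edge_state doubleS state_succ idle {1}/proto_step /= odd_double /= uphalf_double.
by rewrite tag_state -map_comp.
Qed.

Lemma big_adj_states (I : Type) (idx : I) (op : Monoid.com_law idx) (g : T -> I) j e :
  \big[op/idx]_(s <- adj_states j e) g s =
  \big[op/idx]_(v in ev e) \big[op/idx]_(f | (v \in ev f) && (f != e)) g (edge_state j f).
Proof.
have collect v : (state j.*2.+1 (inl v)).2 = [seq (state j.*2 y).1 | y <- nbrs ev id (inl v)].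
  by rewrite /= {1}/proto_step /= odd_double /= -map_comp.
rewrite /adj_states big_filter big_flatten big_map /nbrs.
rewrite (perm_big _ (permEl (perm_sort _ _))) big_enum big_sumType.
rewrite [\big[_/_]_(i | inr i \in _) _]big_pred0 ?Monoid.mulm1 => [|f].
  2: by rewrite unfold_in.
apply: eq_big => [v|v ve]; first by rewrite unfold_in.
rewrite collect big_map (perm_big _ (permEl (perm_sort _ _))).
rewrite big_enum_cond big_sumType.
rewrite [\big[_/_]_(i | (inl i \in _) && _) _]big_pred0 ?Monoid.mul1m => [|w].
  2: by rewrite unfold_in.
apply: eq_bigl => f; rewrite unfold_in /= tag_state.
by rewrite (inj_eq id_inj) (inj_eq (@inr_inj _ _)).
Qed.

Lemma all_adj_states p j e :
  all p (adj_states j e) = [forall f, edge_adj ev e f ==> p (edge_state j f)].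
Proof.
rewrite -big_all big_adj_states big_andE.
apply/forall_inP/forallP => [H f | H v ve].
  apply/implyP => /edge_adjP [fe [v ve vf]].
  by move: (H v ve); rewrite big_andE => /forall_inP; apply; rewrite vf fe.
rewrite big_andE; apply/forall_inP => f /andP [vf fe].
by apply: (implyP (H f)); apply/edge_adjP; split=> //; exists v.
Qed.

Lemma has_adj_states p j e :
  has p (adj_states j e) = [exists f, edge_adj ev e f && p (edge_state j f)].
Proof.
apply/negb_inj; rewrite -all_predC all_adj_states negb_exists.
by apply: eq_forallb => f; rewrite negb_and implybE.
Qed.

End EdgeProtocol.

Section LocalRatio.
Variables (R : realFieldType) (V E : finType) (ev : E -> {set V}) (a : E -> R).
Variables (cls : E -> nat) (delta : E -> R) (J : pred E).
Local Open Scope ring_scope.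

(* An edge meeting [e] in several vertices is counted once per common vertex. *)
Definition lower_load (e : E) : R :=
  \sum_(v in ev e) \sum_(f | (v \in ev f) && (cls f < cls e)%N) delta f.

Hypothesis cls_proper : forall e f, edge_adj ev e f -> cls e != cls f.
Hypothesis deltaE : forall e, delta e = Num.max 0 (a e - lower_load e).
Hypothesis JE : forall e,
  J e = (0 < delta e) && ~~ [exists f, edge_adj ev e f && ((cls e < cls f)%N && J f)].

Lemma local_ratio_matching : is_matching ev [set e | J e].
Proof.
move=> e1 e2; rewrite !inE => J1 J2 ne; apply/pred0P => v /=.
apply/negbTE/negP => /andP [v1 v2].
have adj12 : edge_adj ev e1 e2 by apply/edge_adjP; rewrite eq_sym; split=> //; exists v.
have adj21 : edge_adj ev e2 e1 by rewrite edge_adj_sym.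
case: (ltngtP (cls e1) (cls e2)) => [lt12|lt21|eq12].
- by move: J1; rewrite JE => /andP [_ /existsP []]; exists e2; rewrite adj12 lt12 J2.
- by move: J2; rewrite JE => /andP [_ /existsP []]; exists e1; rewrite adj21 lt21 J1.
- by move: (cls_proper adj12); rewrite eq12 eqxx.
Qed.

Lemma delta_ge0 e : 0 <= delta e.
Proof. by rewrite deltaE le_max lexx. Qed.

Lemma weight_le_delta_load e : a e <= delta e + lower_load e.
Proof. by rewrite -lerBlDr deltaE le_max lexx orbT. Qed.

Lemma weight_eq_delta_load e : J e -> a e = delta e + lower_load e.
Proof.
rewrite JE => /andP [pos _].
have /ltW ge0 : 0 < a e - lower_load e by move: pos; rewrite deltaE lt_max ltxx.
by rewrite deltaE max_r // subrK.
Qed.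

Definition charge (g f : E) : R :=
  (if g == f then delta f else 0) +
  \sum_(v in ev g) (if (v \in ev f) && (cls f < cls g)%N then delta f else 0).

Lemma charge_ge0 g f : 0 <= charge g f.
Proof.
rewrite addr_ge0 //; first by case: ifP => _; rewrite ?delta_ge0.
by apply: sumr_ge0 => v _; case: ifP => _; rewrite ?delta_ge0.
Qed.

Lemma sum_charge g : \sum_f charge g f = delta g + lower_load g.
Proof.
rewrite big_split /=; congr (_ + _).
  by rewrite (bigD1 g) //= eqxx big1 ?addr0 // => f; rewrite eq_sym => /negbTE ->.
by rewrite exchange_big; apply: eq_bigr => v _; rewrite [RHS]big_mkcond.
Qed.

(* A positive [delta f] is charged either to [f] itself, if it joined, or to an
   adjacent edge of higher class that joined and thereby blocked [f]. *)
Lemma delta_le_charge f : delta f <= \sum_(g | J g) charge g f.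
Proof.
have sum_ge g : J g -> charge g f <= \sum_(h | J h) charge h f.
  by move=> Jg; rewrite (bigD1 g) //= lerDl sumr_ge0 // => h _; apply: charge_ge0.
have [Jf|] := boolP (J f).
  apply: le_trans (sum_ge f Jf); rewrite /charge eqxx lerDl.
  by apply: sumr_ge0 => v _; rewrite ltnn andbF.
have [-> _|pos] := eqVneq (delta f) 0.
  by apply: sumr_ge0 => g _; apply: charge_ge0.
have {}pos : 0 < delta f by rewrite lt_def pos delta_ge0.
rewrite JE pos negbK => /existsP [g /andP [/edge_adjP [gf [v vf vg]] /andP [lt Jg]]].
apply: le_trans (sum_ge g Jg); rewrite /charge -[X in X <= _]add0r.
apply: lerD; first by case: ifP => _; rewrite ?delta_ge0.
rewrite (bigD1 v) //= vf lt lerDl.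
by apply: sumr_ge0 => w _; case: ifP => _; rewrite ?delta_ge0.
Qed.

Lemma sum_delta_le_weight : \sum_f delta f <= \sum_(g | J g) a g.
Proof.
apply: le_trans (ler_sum _ (fun f _ => delta_le_charge f)) _.
rewrite exchange_big /=; apply: ler_sum => g Jg.
by rewrite sum_charge (weight_eq_delta_load Jg).
Qed.

Variables (r D : nat).
Hypotheses (hrank : rank_le ev r) (hdeg : maxdeg_le ev D).

Lemma sum_lower_load_le : \sum_e lower_load e <= (r * D)%:R * \sum_f delta f.
Proof.
pose Y v := \sum_f if v \in ev f then delta f else 0.
have Y_ge0 v : 0 <= Y v by apply: sumr_ge0 => f _; case: ifP => _; rewrite ?delta_ge0.
apply: (@le_trans _ _ (\sum_e \sum_(v in ev e) Y v)).
  apply: ler_sum => e _; apply: ler_sum => v _.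
  rewrite big_mkcond; apply: ler_sum => f _; case: (v \in ev f) => //=.
  by case: ifP => _; rewrite ?delta_ge0.
rewrite (eq_bigr (fun e => \sum_v if v \in ev e then Y v else 0)); last first.
  by move=> e _; rewrite big_mkcond.
rewrite exchange_big /=.
apply: (@le_trans _ _ (\sum_v Y v *+ D)).
  apply: ler_sum => v _; rewrite -big_mkcond /=.
  rewrite (eq_bigl (fun e => e \in [set e | v \in ev e])) => [|e]; last by rewrite inE.
  by rewrite sumr_const ler_wpMn2l.
apply: (@le_trans _ _ ((\sum_f delta f *+ r) *+ D)).
  rewrite sumrMnl; apply: ler_wMn2r; rewrite /Y exchange_big /=.
  apply: ler_sum => f _; rewrite -big_mkcond /= (eq_bigl (fun v => v \in ev f)) //.
  by rewrite sumr_const ler_wpMn2l ?delta_ge0.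
by rewrite sumrMnl mulr_natl mulrnA.
Qed.

Lemma local_ratio_weight : (0 < r * D)%N ->
  2^-1 * \sum_e a e <= (r * D)%:R * \sum_(g | J g) a g.
Proof.
move=> rD_gt0.
have hE : \sum_e a e <= \sum_e delta e + \sum_e lower_load e.
  by rewrite -big_split /=; apply: ler_sum => e _; apply: weight_le_delta_load.
have hL := sum_lower_load_le; have hM := sum_delta_le_weight.
have hD : 0 <= \sum_f delta f by apply: sumr_ge0 => f _; apply: delta_ge0.
have hx : 1 <= (r * D)%:R :> R by rewrite ler1n.
(* [a(E) <= (1 + x) sum delta <= (1 + x) a(M) <= 2 x a(M)] with [x = r D >= 1] *)
move: hE hL hM hD hx; set x := (r * D)%:R; nra.
Qed.

End LocalRatio.

Lemma digits_inj q n c1 c2 : 0 < q -> c1 < q ^ n -> c2 < q ^ n ->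
  (forall i, i < n -> c1 %/ q ^ i %% q = c2 %/ q ^ i %% q) -> c1 = c2.
Proof.
move=> q_gt0; elim: n c1 c2 => [|n IHn] c1 c2.
  by rewrite expn0 !ltnS !leqn0 => /eqP -> /eqP ->.
move=> lt1 lt2 eq_dig.
have high : c1 %/ q = c2 %/ q.
  apply: IHn; rewrite ?ltn_divLR // -?expnSr // => i lt_in.
  by have := eq_dig i.+1 lt_in; rewrite expnS !divnMA.
have := eq_dig 0 (ltn0Sn _); rewrite expn0 !divn1 => low.
by rewrite (divn_eq c1 q) (divn_eq c2 q) high low.
Qed.

Section ColourPolynomials.
Variables (F : finFieldType) (k : nat).
Local Notation Q := #|F|.
Local Open Scope ring_scope.

Definition field_elt (i : nat) : F := nth 0 (enum F) i.
Definition field_index (x : F) : nat := index x (enum F).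

Lemma field_index_lt x : (field_index x < Q)%N.
Proof. by rewrite /field_index cardE index_mem mem_enum. Qed.

Lemma field_indexK : cancel field_index field_elt.
Proof. by move=> x; rewrite /field_elt /field_index nth_index ?mem_enum. Qed.

Lemma field_elt_inj i1 i2 :
  (i1 < Q)%N -> (i2 < Q)%N -> field_elt i1 = field_elt i2 -> i1 = i2.
Proof. by move=> h1 h2 /eqP; rewrite nth_uniq ?enum_uniq -?cardE // => /eqP. Qed.

Definition colour_poly (c : nat) : {poly F} :=
  \poly_(i < k) field_elt (c %/ Q ^ i %% Q) + 'X^(k.+1).

Lemma card_roots_lt (p : {poly F}) : p != 0 -> (#|[set x | root p x]| < size p)%N.
Proof.
move=> p_neq0; rewrite cardE; apply: max_poly_roots p_neq0 _ (enum_uniq _).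
by apply/allP => x; rewrite mem_enum inE.
Qed.

Lemma card_colour_poly_agree c1 c2 : (c1 < Q ^ k)%N -> (c2 < Q ^ k)%N -> c1 != c2 ->
  (#|[set x | (colour_poly c1).[x] == (colour_poly c2).[x]]| <= k)%N.
Proof.
move=> lt1 lt2 neq; set p := colour_poly c1 - colour_poly c2.
have Q_gt0 : (0 < Q)%N by apply/card_gt0P; exists 0.
have size_p : (size p <= k)%N.
  rewrite /p /colour_poly opprD addrACA subrr addr0.
  by apply: leq_trans (size_polyD _ _) _; rewrite geq_max size_polyN !size_poly.
have p_neq0 : p != 0.
  apply: contra_neq neq => p0.
  apply: (digits_inj Q_gt0 lt1 lt2) => i lt_ik; apply: field_elt_inj; rewrite ?ltn_pmod //.
  have := congr1 (fun q : {poly F} => q`_i) p0.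
  rewrite coefB !coefD !coefXn !coef_poly coef0 lt_ik.
  by rewrite (ltn_eqF (leqW lt_ik)) !addr0 => /eqP; rewrite subr_eq0 => /eqP.
have agree_root :
    [set x | (colour_poly c1).[x] == (colour_poly c2).[x]] \subset [set x | root p x].
  by apply/subsetP => x; rewrite !inE rootE !hornerE subr_eq0.
apply: leq_trans (subset_leq_card agree_root) _; rewrite -ltnS.
exact: leq_trans (card_roots_lt p_neq0) (leq_trans size_p _).
Qed.

Lemma card_colour_poly_hits c y : (#|[set x | (colour_poly c).[x] == y]| <= k.+1)%N.
Proof.
set p := colour_poly c - y%:P.
have p_neq0 : p != 0.
  apply/eqP => p0; have := congr1 (fun q : {poly F} => q`_k.+1) p0.
  rewrite coefB coefD coef_poly ltnNge leqnSn coefXn eqxx coefC coef0 /= add0r subr0.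
  by move/eqP; rewrite oner_eq0.
have size_p : (size p <= k.+2)%N.
  apply: leq_trans (size_polyD _ _) _; rewrite geq_max size_polyN size_polyC.
  rewrite (leq_trans (leq_b1 _)) // andbT; apply: leq_trans (size_polyD _ _) _.
  rewrite geq_max size_polyXn leqnn andbT.
  exact: leq_trans (size_poly _ _) (leqW (leqW (leqnn k))).
have hit_root : [set x | (colour_poly c).[x] == y] \subset [set x | root p x].
  by apply/subsetP => x; rewrite !inE rootE !hornerE subr_eq0.
apply: leq_trans (subset_leq_card hit_root) _; rewrite -ltnS.
exact: leq_trans (card_roots_lt p_neq0) size_p.
Qed.

End ColourPolynomials.

Section Algorithm.
Variables (R : realFieldType) (F : finFieldType) (k N : nat).
Local Notation Q := #|F|.

Record alg_state := AlgState {
  st_id : nat; st_col0 : nat; st_weight : R;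
  st_coloured : bool; st_col : nat; st_delta : R; st_joined : bool }.

Definition set_col (s : alg_state) (c : nat) : alg_state :=
  AlgState (st_id s) (st_col0 s) (st_weight s) true c (st_delta s) (st_joined s).
Definition set_delta (s : alg_state) (d : R) : alg_state :=
  AlgState (st_id s) (st_col0 s) (st_weight s) (st_coloured s) (st_col s) d (st_joined s).
Definition set_joined (s : alg_state) (b : bool) : alg_state :=
  AlgState (st_id s) (st_col0 s) (st_weight s) (st_coloured s) (st_col s) (st_delta s) b.

Definition candidate (j c : nat) : nat := field_index (colour_poly F k c).[field_elt F j]%R.

Definition shown_col (j : nat) (s : alg_state) : nat :=
  if st_coloured s then st_col s else candidate j (st_col0 s).

Definition colour_step (j : nat) (s : alg_state) (ns : seq alg_state) : alg_state :=
  let c := candidate j (st_col0 s) in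
  if ~~ st_coloured s && all (fun f => shown_col j f != c) ns then set_col s c else s.

Definition ratio_step (i : nat) (s : alg_state) (ns : seq alg_state) : alg_state :=
  if st_col s == i then set_delta s (Num.max 0 (st_weight s - \sum_(f <- ns) st_delta f))%R
  else s.

Definition join_step (i : nat) (s : alg_state) (ns : seq alg_state) : alg_state :=
  if st_col s == i then set_joined s ((0 < st_delta s)%R && ~~ has st_joined ns) else s.

Definition alg_step (j : nat) (s : alg_state) (ns : seq alg_state) : alg_state :=
  if j < N then colour_step j s ns
  else if j < N + Q then ratio_step (j - N) s ns
  else if j < N + Q + Q then join_step (Q.-1 - (j - N - Q)) s ns
  else s.

Definition alg_init (i : bool * nat * nat * R) : alg_state :=
  AlgState i.1.1.2 i.1.2 i.2 false 0 0%R false.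

Definition alg_rounds : nat := (N + Q + Q).*2.

Definition alg_output (w : view R) : bool :=
  st_joined (run_view (proto_init alg_init) (proto_step st_id alg_step) alg_rounds w).1.

Lemma alg_step_fixed j s ns : let s' := alg_step j s ns in
  [/\ st_id s' = st_id s, st_col0 s' = st_col0 s & st_weight s' = st_weight s].
Proof. by rewrite /alg_step /colour_step /ratio_step /join_step; repeat case: ifP. Qed.

Lemma alg_step_id j s ns : st_id (alg_step j s ns) = st_id s.
Proof. by case: (alg_step_fixed j s ns). Qed.

Lemma joined_join_step i s ns : st_col s = i ->
  st_joined (join_step i s ns) = (0 < st_delta s)%R && ~~ has st_joined ns.
Proof. by move=> <-; rewrite /join_step eqxx. Qed.

Lemma alg_init_id i : st_id (alg_init i) = i.1.1.2.
Proof. by []. Qed.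

Section Analysis.
Variables (V E : finType) (ev : E -> {set V}) (id col : V + E -> nat) (a : E -> R).
Variables (r D : nat).
Hypotheses (id_inj : injective id) (hrank : rank_le ev r) (hdeg : maxdeg_le ev D).
Hypotheses (hcol : dist2_proper ev col) (col_lt : forall x, col x < (r + D) ^ k).
Hypotheses (rD_le_Q : r + D <= Q) (N_gt : 2 * k.+1 * (r * D) < N) (N_le_Q : N <= Q).

Local Notation st := (edge_state st_id alg_init alg_step ev id col a).
Local Notation adj_st := (adj_states st_id alg_init alg_step ev id col a).
Local Notation adj := (edge_adj ev).

Lemma st_succ j e : st j.+1 e = alg_step j (st j e) (adj_st j e).
Proof. exact: (@edge_state_succ _ _ _ _ _ alg_init_id alg_step_id). Qed.

Lemma st_fixed j e :
  [/\ st_id (st j e) = id (inr e), st_col0 (st j e) = col (inr e) & st_weight (st j e) = a e].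
Proof.
elim: j => [|j IH] //; rewrite st_succ.
by case: (alg_step_fixed j (st j e) (adj_st j e)) => -> -> ->.
Qed.

Lemma step_colour j e : j < N -> st j.+1 e =
  if ~~ st_coloured (st j e) &&
     [forall f, adj e f ==> (shown_col j (st j f) != candidate j (col (inr e)))]
  then set_col (st j e) (candidate j (col (inr e))) else st j e.
Proof.
move=> lt_jN; rewrite st_succ /alg_step lt_jN /colour_step.
rewrite (@all_adj_states _ _ _ _ _ alg_init_id alg_step_id _ _ _ _ _ _ id_inj).
by case: (st_fixed j e) => _ -> _.
Qed.

Lemma coloured_succ j e : st_coloured (st j e) ->
  st_coloured (st j.+1 e) /\ st_col (st j.+1 e) = st_col (st j e).
Proof.
move=> c0; rewrite st_succ /alg_step /colour_step /ratio_step /join_step c0 /=.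
by repeat case: ifP.
Qed.

Lemma coloured_mono j j' e : j <= j' -> st_coloured (st j e) ->
  st_coloured (st j' e) /\ st_col (st j' e) = st_col (st j e).
Proof.
move=> + c0; elim: j' => [|j' IH]; first by rewrite leqn0 => /eqP <-.
rewrite leq_eqVlt => /orP [/eqP <- //|lt_jj'].
by have [c1 <-] := IH lt_jj'; apply: coloured_succ c1.
Qed.

Lemma colouring_done j e : N <= j ->
  st_coloured (st j.+1 e) = st_coloured (st j e) /\ st_col (st j.+1 e) = st_col (st j e).
Proof.
move=> le_Nj; rewrite st_succ /alg_step ltnNge le_Nj /= /ratio_step /join_step.
by repeat case: ifP.
Qed.

Lemma newly_coloured j e : ~~ st_coloured (st j e) -> st_coloured (st j.+1 e) ->
  [/\ j < N, st_col (st j.+1 e) = candidate j (col (inr e)) &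
      forall f, adj e f -> shown_col j (st j f) != candidate j (col (inr e))].
Proof.
move=> nc0 c1; case: (ltnP j N) => [lt_jN|le_Nj]; last first.
  by have [c _] := colouring_done e le_Nj; rewrite c (negbTE nc0) in c1.
move: c1; rewrite step_colour // nc0 /=.
case: ifP => [/forallP all_ok _|_]; last by rewrite (negbTE nc0).
by split=> // f af; move: (all_ok f); rewrite af.
Qed.

Lemma shown_col_final j f : j < N -> st_coloured (st j.+1 f) ->
  shown_col j (st j f) = st_col (st j.+1 f).
Proof.
move=> lt_jN c1; have [c0|nc0] := boolP (st_coloured (st j f)).
  by have [_ ->] := coloured_succ c0; rewrite /shown_col c0.
have [_ -> _] := newly_coloured nc0 c1.
by rewrite /shown_col (negbTE nc0); case: (st_fixed j f) => _ -> _.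
Qed.

Lemma coloured_col_lt j e : st_coloured (st j e) -> st_col (st j e) < Q.
Proof.
elim: j => [|j IH] //; case: (boolP (st_coloured (st j e))) => [c0 _|nc0 c1].
  by have [_ ->] := coloured_succ c0; apply: IH.
by have [_ -> _] := newly_coloured nc0 c1; apply: field_index_lt.
Qed.

Lemma colouring_proper j e f : j <= N -> adj e f ->
  st_coloured (st j e) -> st_coloured (st j f) -> st_col (st j e) != st_col (st j f).
Proof.
elim: j => [|j IH] le_jN af // ce cf; have lt_jN : j < N by [].
have [ce0|nce0] := boolP (st_coloured (st j e)).
  have [cf0|ncf0] := boolP (st_coloured (st j f)).
    have [_ ->] := coloured_succ ce0; have [_ ->] := coloured_succ cf0.
    exact: IH (ltnW le_jN) af ce0 cf0.
  rewrite -(shown_col_final lt_jN ce); have [_ -> ok] := newly_coloured ncf0 cf.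
  by apply: ok; rewrite edge_adj_sym.
rewrite -(shown_col_final lt_jN cf); have [_ -> ok] := newly_coloured nce0 ce.
by rewrite eq_sym; apply: ok.
Qed.

Definition final_col e := st_col (st N e).

(* The evaluation points at which a still uncoloured edge [e] can be blocked: an
   adjacent edge either proposes the same value or already holds it as its colour. *)
Definition blocked_points e : {set F} :=
  \bigcup_(f | adj e f)
    ([set x | (colour_poly F k (col (inr e))).[x] == (colour_poly F k (col (inr f))).[x]]%R :|:
     [set x | (colour_poly F k (col (inr e))).[x] == field_elt F (final_col f)]%R).

Lemma uncoloured_blocked j e : j < N -> ~~ st_coloured (st j.+1 e) ->
  field_elt F j \in blocked_points e.
Proof.
move=> lt_jN nc1.
have nc0 : ~~ st_coloured (st j e) by apply: contra nc1 => c0; have [] := coloured_succ c0.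
move: nc1; rewrite step_colour // nc0 /=; case: ifP => [_ //|/negbT].
rewrite negb_forall => /existsP [f]; rewrite negb_imply negbK => /andP [af /eqP same] _.
apply/bigcupP; exists f => //; rewrite !inE.
have [cf|ncf] := boolP (st_coloured (st j f)).
  have [_ fc] := coloured_mono (ltnW lt_jN) cf.
  rewrite /shown_col cf in same.
  by rewrite /final_col fc same /candidate field_indexK eqxx orbT.
rewrite /shown_col (negbTE ncf) in same; case: (st_fixed j f) same => _ -> _.
by move/(can_inj (@field_indexK F)) => ->; rewrite eqxx.
Qed.

Lemma card_blocked_points e : #|blocked_points e| <= 2 * k.+1 * (r * D).
Proof.
have col_lt_Qk x : col x < Q ^ k.
  apply: leq_trans (col_lt x) _.
  by case: (posnP k) => [->|k_gt0]; rewrite ?expn0 ?leq_exp2r.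
apply: leq_trans (card_bigcup_leq _ _) _.
apply: (@leq_trans (\sum_(f | adj e f) 2 * k.+1)).
  apply: leq_sum => f af; apply: leq_trans (leq_card_setU _ _) _.
  rewrite mul2n -addnn leq_add ?card_colour_poly_hits //.
  apply: leq_trans (card_colour_poly_agree (col_lt_Qk _) (col_lt_Qk _) _) (leqnSn _).
  exact: edge_adj_col hcol af.
rewrite (eq_bigl (fun f => f \in [set f | adj e f])) => [|f]; last by rewrite inE.
by rewrite sum_nat_const mulnC leq_mul2l card_edge_adj ?orbT.
Qed.

Lemma all_coloured e : st_coloured (st N e).
Proof.
apply/negPn/negP => nc.
have nc_j j : j <= N -> ~~ st_coloured (st j e).
  by move=> le_jN; apply: contra nc => cj; have [] := coloured_mono le_jN cj.
have sub : [set field_elt F j | j : 'I_N] \subset blocked_points e.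
  apply/subsetP => _ /imsetP [j _ ->].
  exact: uncoloured_blocked (ltn_ord j) (nc_j _ (ltn_ord j)).
have card_pts : #|[set field_elt F j | j : 'I_N]| = N.
  rewrite card_imset ?card_ord // => j1 j2 eq12; apply: val_inj.
  by apply: field_elt_inj eq12; apply: leq_trans (ltn_ord _) N_le_Q.
have := leq_trans (subset_leq_card sub) (card_blocked_points e).
by rewrite card_pts leqNgt N_gt.
Qed.

Lemma final_col_stable j e : N <= j -> st_coloured (st j e) /\ st_col (st j e) = final_col e.
Proof. by move=> le_Nj; apply: coloured_mono le_Nj (all_coloured e). Qed.

Lemma final_col_lt e : final_col e < Q.
Proof. exact: coloured_col_lt (all_coloured e). Qed.

Lemma final_col_proper e f : adj e f -> final_col e != final_col f.
Proof. by move=> af; apply: colouring_proper (leqnn N) af (all_coloured e) (all_coloured f). Qed.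

Lemma colouring_blank j e : j <= N -> st_delta (st j e) = 0%R /\ st_joined (st j e) = false.
Proof.
elim: j => [|j IH] le_jN //; have lt_jN : j < N by [].
have [d0 j0] := IH (ltnW le_jN).
by rewrite st_succ /alg_step lt_jN /colour_step; case: ifP.
Qed.

Lemma step_ratio i e : i < Q -> st (N + i).+1 e = ratio_step i (st (N + i) e) (adj_st (N + i) e).
Proof. by move=> lt_iQ; rewrite st_succ /alg_step ltnNge leq_addr ltn_add2l lt_iQ addKn. Qed.

Lemma step_join i e : i < Q ->
  st (N + Q + i).+1 e = join_step (Q.-1 - i) (st (N + Q + i) e) (adj_st (N + Q + i) e).
Proof.
move=> lt_iQ; rewrite st_succ /alg_step ltn_add2l lt_iQ.
have -> : (N + Q + i < N) = false by lia.
have -> : (N + Q + i < N + Q) = false by lia.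
by have -> : N + Q + i - N - Q = i by lia.
Qed.

Lemma ratio_unjoined i e : i <= Q -> st_joined (st (N + i) e) = false.
Proof.
elim: i => [|i IH] le_iQ; first by rewrite addn0; case: (colouring_blank e (leqnn N)).
by rewrite addnS step_ratio // /ratio_step; case: ifP => _; rewrite /= IH // ltnW.
Qed.

Lemma delta_before_turn i e : i <= Q -> i <= final_col e -> st_delta (st (N + i) e) = 0%R.
Proof.
elim: i => [|i IH] le_iQ le_ic; first by rewrite addn0; case: (colouring_blank e (leqnn N)).
rewrite addnS step_ratio // /ratio_step (final_col_stable e (leq_addr _ _)).2.
by rewrite (gtn_eqF le_ic) IH // ltnW.
Qed.

Lemma delta_after_turn i e : i <= Q -> final_col e < i ->
  st_delta (st (N + i) e) = st_delta (st (N + (final_col e).+1) e).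
Proof.
elim: i => [|i IH] le_iQ // lt_ci.
move: lt_ci; rewrite ltnS leq_eqVlt => /orP [/eqP -> //|lt_ci].
rewrite addnS step_ratio // /ratio_step (final_col_stable e (leq_addr _ _)).2.
by rewrite (ltn_eqF lt_ci) IH // ltnW.
Qed.

Definition delta e := st_delta (st (N + Q) e).

Lemma delta_at_turn e :
  delta e = (Num.max 0 (a e - \sum_(s <- adj_st (N + final_col e) e) st_delta s))%R.
Proof.
rewrite /delta (delta_after_turn (leqnn Q) (final_col_lt e)) addnS step_ratio ?final_col_lt //.
rewrite /ratio_step (final_col_stable e (leq_addr _ _)).2 eqxx /=.
by case: (st_fixed (N + final_col e) e) => _ _ ->.
Qed.

Lemma delta_seen e f :
  st_delta (st (N + final_col e) f) = if final_col f < final_col e then delta f else 0%R.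
Proof.
have le_cQ := ltnW (final_col_lt e).
case: ifP => [lt_fe|/negbT]; last by rewrite -leqNgt; apply: delta_before_turn.
by rewrite /delta (delta_after_turn (leqnn Q) (final_col_lt f)) (delta_after_turn le_cQ lt_fe).
Qed.

Lemma deltaE e : delta e = (Num.max 0 (a e - lower_load ev final_col delta e))%R.
Proof.
rewrite delta_at_turn (@big_adj_states _ _ _ _ _ alg_init_id alg_step_id _ _ _ _ _ _ id_inj).
congr (Num.max _ (_ - _))%R; apply: eq_bigr => v _.
rewrite (eq_bigr _ (fun f _ => delta_seen e f)) -big_mkcondr /=.
by apply: eq_bigl => f; case: (eqVneq f e) => [->|ne]; rewrite ?eqxx ?ltnn ?andbF ?andbT.
Qed.

Lemma final_col_join i e : st_col (st (N + Q + i) e) = final_col e.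
Proof. exact: (final_col_stable e (leq_trans (leq_addr _ _) (leq_addr _ _))).2. Qed.

Lemma delta_stable i e : i <= Q -> st_delta (st (N + Q + i) e) = delta e.
Proof.
elim: i => [|i IH] le_iQ; first by rewrite addn0.
by rewrite addnS step_join // /join_step; case: ifP => _; rewrite /= IH // ltnW.
Qed.

Lemma join_before_turn i e : final_col e < Q - i -> st_joined (st (N + Q + i) e) = false.
Proof.
elim: i => [|i IH] lt_c; first by rewrite addn0 ratio_unjoined.
rewrite addnS step_join; last by lia.
rewrite /join_step final_col_join.
have -> : (final_col e == Q.-1 - i) = false by apply/negbTE; lia.
by apply: IH; lia.
Qed.

Definition joined e := st_joined (st (N + Q + Q) e).

Lemma joined_after_turn i e : i <= Q -> Q - final_col e <= i ->
  st_joined (st (N + Q + i) e) = joined e.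
Proof.
suff turn j : j <= Q -> Q - final_col e <= j ->
    st_joined (st (N + Q + j) e) = st_joined (st (N + Q + (Q - final_col e)) e).
  by move=> le_iQ le_ti; rewrite /joined !turn // leq_subr.
have lt_cQ := final_col_lt e.
elim: j => [|j IH] le_jQ le_tj; first by lia.
move: le_tj; rewrite leq_eqVlt => /orP [/eqP <- //|lt_tj].
rewrite addnS step_join; last by lia.
rewrite /join_step final_col_join.
have -> : (final_col e == Q.-1 - j) = false by apply/negbTE; lia.
by apply: IH; lia.
Qed.

Lemma joinedE e : joined e =
  (0 < delta e)%R && ~~ [exists f, adj e f && ((final_col e < final_col f) && joined f)].
Proof.
have lt_cQ := final_col_lt e.
rewrite -(joined_after_turn (leq_subr _ _) (leqnn _)).
have -> : Q - final_col e = (Q.-1 - final_col e).+1 by lia.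
rewrite addnS step_join; last by lia.
have -> : Q.-1 - (Q.-1 - final_col e) = final_col e by lia.
rewrite joined_join_step ?final_col_join // delta_stable; last by lia.
rewrite (@has_adj_states _ _ _ _ _ alg_init_id alg_step_id _ _ _ _ _ _ id_inj).
congr (_ && ~~ _); apply: eq_existsb => f; congr (_ && _).
have lt_fQ := final_col_lt f.
have [lt_ef|le_fe] := ltnP (final_col e) (final_col f).
  by rewrite joined_after_turn //; lia.
by rewrite join_before_turn //; lia.
Qed.

Lemma alg_output_set : run_local ev id col a alg_rounds alg_output = [set e | joined e].
Proof. by apply/setP => e; rewrite !inE /alg_output run_view_knowledge. Qed.

Lemma alg_matching : is_matching ev (run_local ev id col a alg_rounds alg_output).
Proof.
by rewrite alg_output_set; apply: local_ratio_matching final_col_proper joinedE.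
Qed.

Lemma alg_weight : 0 < r * D ->
  (2^-1 * weight a [set: E] <=
   (r * D)%:R * weight a (run_local ev id col a alg_rounds alg_output))%R.
Proof.
move=> rD_gt0; rewrite alg_output_set /weight.
have -> : (\sum_(e in [set: E]) a e = \sum_e a e)%R by apply: eq_bigl => e; rewrite inE.
have -> : (\sum_(e in [set e | joined e]) a e = \sum_(e | joined e) a e)%R.
  by apply: eq_bigl => e; rewrite inE.
exact: (local_ratio_weight deltaE joinedE hrank hdeg rD_gt0).
Qed.

End Analysis.
End Algorithm.

Lemma finField_card_between m : 0 < m -> exists F : finFieldType, m < #|F| <= m.*2.
Proof.
move=> m_gt0; pose PF := pPrimePowerField (isT : prime 2) (ltn0Sn (trunc_log 2 m)).
exists (s2val PF); rewrite (s2valP' PF) trunc_log_ltn //= expnS mul2n leq_double.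
exact: trunc_logP.
Qed.

Theorem lemma2p3 :
  exists c : rat, (0 < c)%R /\
  forall (R : realFieldType) (k : nat),
  exists C : nat,
  forall (n r D : nat), 2 <= r -> 1 <= D ->
  exists (t : nat) (A : view R -> bool),
    t <= C * r * D /\
    forall (V E : finType) (ev : E -> {set V}) (id col : V + E -> nat) (a : E -> R),
      injective ev ->
      #|V| <= n ->
      rank_le ev r ->
      maxdeg_le ev D ->
      injective id ->
      dist2_proper ev col ->
      (forall x, col x < (r + D) ^ k) ->
      (forall e, 0 <= a e)%R ->
      let M := run_local ev id col a t A in
      is_matching ev M /\
      (ratr c * weight a [set: E] <= (r * D)%:R * weight a M)%R.
Proof.
exists 2^-1%R; split=> // R k; exists (10 * (2 * k + 5)) => n r D r_ge2 D_ge1.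
pose N := 2 * k.+1 * (r * D) + 1.
have rD_gt0 : 0 < r * D by rewrite muln_gt0; apply/andP; split; lia.
have [F /andP [lt_F le_F]] : exists F : finFieldType, N + r + D < #|F| <= (N + r + D).*2.
  by apply: finField_card_between; lia.
exists (alg_rounds F N), (alg_output F k N); split.
  rewrite /alg_rounds -muln2 -!mul2n in le_F *.
  have le_r : r <= r * D by rewrite leq_pmulr.
  have le_D : D <= r * D by rewrite leq_pmull //; lia.
  rewrite /N in le_F *; nia.
move=> V E ev id col a _ _ hrank hdeg id_inj hcol col_lt _ /=.
have rD_le_Q : r + D <= #|F| by lia.
have N_le_Q : N <= #|F| by lia.
have N_gt : 2 * k.+1 * (r * D) < N by rewrite /N addn1.
split; first exact: alg_matching id_inj hrank hdeg hcol col_lt rD_le_Q N_gt N_le_Q.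
have half : (ratr 2^-1 = 2^-1 :> R)%R by rewrite fmorphV /= ratr_nat.
rewrite half; exact: (alg_weight a id_inj hrank hdeg hcol col_lt rD_le_Q N_gt N_le_Q rD_gt0).
Qed.
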